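(* Let $n\ge2$, let $A\in\mathbb{R}^{n\times n}$ be symmetric with zero diagonal, $\theta\in\mathbb{R}^n$, $\lambda>0$, and $p_1,\dots,p_n\in[0,1)$ with $p_{\max}=\max_ip_i$. Then for every fixed $w\in\mathbb{R}^{2n+1}$, $\mathbb{E}_{X\sim\mathcal{D}_{\mathsf{miss}}}[\underline G(w;X)]=\nabla\widetilde{\underline S}(w)$, and for all $X\in\{-1,0,1\}^n$ and $w\in\Delta(\lambda,2n+1)$, $\|\underline G(w;X)\|_\infty\le\frac{1}{(1-p_{\max})^2}\exp\big(\frac{\lambda}{1-p_{\max}}\big)$.
   Context: Ising model $\mathcal{D}(A,\theta)$ on $\{-1,1\}^n$: $\Pr[Z=z]\propto\exp\big(\sum_{i<j}A_{ij}z_iz_j+\sum_i\theta_iz_i\big)$. Missing-data distribution $\mathcal{D}_{\mathsf{miss}}$: draw $Z\sim\mathcal{D}(A,\theta)$ and independent $C_1,\dots,C_n\in\{0,1\}$ with $\Pr[C_i=1]=1-p_i$; output $X$ with $X_i=C_iZ_i$. $\Delta(W,k)=\{x\in\mathbb{R}^k:x\ge0,\sum_ix_i=W\}$. For $w\in\mathbb{R}^{2n+1}$ put $v_j=w_j-w_{n+j}$ for $j\in[n]$ and $\widetilde{\underline S}(w)=\mathbb{E}_{Z\sim\mathcal{D}(A,\theta)}\big[\exp\big(-\sum_{j=1}^{n-1}v_jZ_nZ_j-v_nZ_n\big)\big]$. Estimator: for $X\in\{-1,0,1\}^n$ and $i\in[n-1]$, $$\underline g^i(w;X)=-\frac{\exp(-v_nX_n)X_n}{1-p_n}\cdot\frac{\exp(-v_iX_nX_i)X_i}{1-p_i}\cdot\prod_{j\in[n-1],j\ne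 i}\frac{\exp(-v_jX_nX_j)-p_j}{1-p_j},\qquad \underline g^n(w;X)=-\frac{\exp(-v_nX_n)X_n}{1-p_n}\prod_{j\in[n-1]}\frac{\exp(-v_jX_nX_j)-p_j}{1-p_j},$$ and $\underline G(w;X)=\sum_{i=1}^{n}\underline g^i(w;X)(e^i-e^{n+i})\in\mathbb{R}^{2n+1}$, with $e^i$ the standard basis vectors of $\mathbb{R}^{2n+1}$. *)

From Stdlib Require Import Reals List Arith Bool.
Import ListNotations.
Open Scope R_scope.

(* Vectors are functions nat -> R, with 1-based meaningful coordinates
   (1..n for configurations, 1..2n+1 for parameters w). *)

Definition lsum {T : Type} (f : T -> R) (l : list T) : R :=
  fold_right (fun x acc => f x + acc) 0 l.
Definition lprod {T : Type} (f : T -> R) (l : list T) : R :=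
  fold_right (fun x acc => f x * acc) 1 l.

Definition idx (n : nat) : list nat := seq 1 n.

Definition upd (z : nat -> R) (k : nat) (a : R) : nat -> R :=
  fun m => if Nat.eqb m k then a else z m.

Fixpoint all_vecs (vals : list R) (k : nat) : list (nat -> R) :=
  match k with
  | O => [fun _ => 0]
  | S k' => flat_map (fun z => map (fun a => upd z (S k') a) vals) (all_vecs vals k')
  end.

Definition cube (n : nat) : list (nat -> R) := all_vecs [1; -1] n.
Definition bits (n : nat) : list (nat -> R) := all_vecs [1; 0] n.

Definition ising_H (n : nat) (A : nat -> nat -> R) (theta : nat -> R) (z : nat -> R) : R :=
  lsum (fun j => lsum (fun i => A i j * z i * z j) (seq 1 (j - 1))) (idx n)
  + lsum (fun i => theta i * z i) (idx n).

Definition ising_Z (n : nat) A theta : R :=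
  lsum (fun z => exp (ising_H n A theta z)) (cube n).

Definition ising_pr (n : nat) A theta (z : nat -> R) : R :=
  exp (ising_H n A theta z) / ising_Z n A theta.

Definition ising_E (n : nat) A theta (f : (nat -> R) -> R) : R :=
  lsum (fun z => ising_pr n A theta z * f z) (cube n).

Definition mask_pr (n : nat) (p : nat -> R) (c : nat -> R) : R :=
  lprod (fun i => if Req_EM_T (c i) 1 then 1 - p i else p i) (idx n).

(* E_{X ~ D_miss}[f X], where X_i = C_i Z_i *)
Definition miss_E (n : nat) A theta (p : nat -> R) (f : (nat -> R) -> R) : R :=
  lsum (fun z => lsum (fun c =>
      ising_pr n A theta z * mask_pr n p c * f (fun i => c i * z i)) (bits n)) (cube n).

Definition vv (n : nat) (w : nat -> R) (j : nat) : R := w j - w (n + j)%nat.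

Definition Stilde (n : nat) A theta (w : nat -> R) : R :=
  ising_E n A theta (fun z =>
    exp (- lsum (fun j => vv n w j * z n * z j) (idx (n - 1)) - vv n w n * z n)).

Definition g_under (n : nat) (p : nat -> R) (w : nat -> R) (X : nat -> R) (i : nat) : R :=
  if Nat.eqb i n then
    - (exp (- vv n w n * X n) * X n / (1 - p n))
      * lprod (fun j => (exp (- vv n w j * X n * X j) - p j) / (1 - p j)) (idx (n - 1))
  else
    - (exp (- vv n w n * X n) * X n / (1 - p n))
      * (exp (- vv n w i * X n * X i) * X i / (1 - p i))
      * lprod (fun j => if Nat.eqb j i then 1
                        else (exp (- vv n w j * X n * X j) - p j) / (1 - p j))
              (idx (n - 1)).

(* G(w;X) = sum_i g^i (e^i - e^{n+i}) in R^{2n+1}; coordinate k (1-based) *)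
Definition G_under (n : nat) (p : nat -> R) (w : nat -> R) (X : nat -> R) (k : nat) : R :=
  if (1 <=? k) && (k <=? n) then g_under n p w X k
  else if (n + 1 <=? k) && (k <=? 2 * n) then - g_under n p w X (k - n)
  else 0.

Definition shift (w : nat -> R) (k : nat) (t : R) : nat -> R :=
  fun m => if Nat.eqb m k then w m + t else w m.

(* p_max = max_i p_i (p_i >= 0, so starting the fold at 0 is harmless) *)
Definition pmax (n : nat) (p : nat -> R) : R := fold_right Rmax 0 (map p (idx n)).

From Stdlib Require Import Reals List Arith.
From Stdlib Require Import Lra Lia.
Import ListNotations.
Open Scope R_scope.

(* Write n = m + 1.  For i <= n the estimator factorises
   ([g_under_product]) as  g^i(w;X) = - dpsi_n(X_n) * prod_{j<n} f_{ij}(X_j),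
   where each f_{ij} is a debiased exponential [dphi] = (exp(a x) - p_j)/(1-p_j)
   or a debiased linear term [dpsi] = exp(a x) x/(1-p_j), with a = -v_j X_n.
   For X = C Z with independent masks C, a sum over the product grid of masks
   of a product of one-coordinate functions is the product of the
   one-coordinate sums ([lsum_grid_lprod]), and the two kinds of factors have
   mask-expectations exp(a z) and exp(a z) z.  Hence
   E_C[g^i(w;CZ)] = ecoef_i(Z) exp(<v, ecoef(Z)>) ([masked_g_mean]), where
   <v, ecoef(Z)> = [expo] is the exponent of S~, linear in v.  Since
   G = sum_i g^i (e^i - e^{n+i}) ([G_under_sum]) and, along w + t e^k, the
   exponent is affine in t with slope sum_i (e^i - e^{n+i})_k ecoef_i
   ([expo_shift]), differentiating the finite sum S~ termwise gives the
   unbiasedness ([G_under_unbiased]).  The sup-norm bound ([G_under_bound])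
   follows from |dphi| <= exp(q |v_j|) (convexity of exp), |dpsi| <=
   q exp(q |v_j|) with q = 1/(1 - p_max), and sum_j |v_j| <= sum_k w_k = lambda.
   Neither claim uses the symmetry or zero diagonal of A, nor lambda > 0. *)

Section ListSums.
Context {T : Type}.
Implicit Types (f g : T -> R) (l : list T).

Lemma lsum_app f l1 l2 : lsum f (l1 ++ l2) = lsum f l1 + lsum f l2.
Proof. induction l1 as [|x l1 IH]; simpl; [ring|]. unfold lsum in *; simpl; rewrite IH; ring. Qed.

Lemma lprod_app f l1 l2 : lprod f (l1 ++ l2) = lprod f l1 * lprod f l2.
Proof. induction l1 as [|x l1 IH]; simpl; [ring|]. unfold lprod in *; simpl; rewrite IH; ring. Qed.

Lemma lsum_cons f x l : lsum f (x :: l) = f x + lsum f l.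
Proof. reflexivity. Qed.

Lemma lprod_cons f x l : lprod f (x :: l) = f x * lprod f l.
Proof. reflexivity. Qed.

Lemma lprod_single f x : lprod f [x] = f x.
Proof. unfold lprod; simpl; ring. Qed.

Lemma lsum_ext_in f g l : (forall x, In x l -> f x = g x) -> lsum f l = lsum g l.
Proof.
  induction l as [|x l IH]; intros H; [reflexivity|].
  rewrite !lsum_cons, H, IH; auto using in_eq, in_cons.
Qed.

Lemma lprod_ext_in f g l : (forall x, In x l -> f x = g x) -> lprod f l = lprod g l.
Proof.
  induction l as [|x l IH]; intros H; [reflexivity|].
  rewrite !lprod_cons, H, IH; auto using in_eq, in_cons.
Qed.

Lemma lsum_scal (a : R) f l : lsum (fun x => a * f x) l = a * lsum f l.
Proof. induction l as [|x l IH]; [simpl; ring|]. rewrite !lsum_cons, IH; ring. Qed.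

Lemma lsum_plus f g l : lsum (fun x => f x + g x) l = lsum f l + lsum g l.
Proof. induction l as [|x l IH]; [simpl; ring|]. rewrite !lsum_cons, IH; ring. Qed.

Lemma lprod_mult f g l : lprod (fun x => f x * g x) l = lprod f l * lprod g l.
Proof. induction l as [|x l IH]; [simpl; ring|]. rewrite !lprod_cons, IH; ring. Qed.

Lemma lsum_zero f l : (forall x, In x l -> f x = 0) -> lsum f l = 0.
Proof.
  intros H; rewrite (lsum_ext_in f (fun _ => 0 * 0)), lsum_scal by (intros; rewrite H; auto; ring).
  ring.
Qed.

Lemma lsum_le f g l : (forall x, In x l -> f x <= g x) -> lsum f l <= lsum g l.
Proof.
  induction l as [|x l IH]; intros H; [simpl; lra|].
  rewrite !lsum_cons; apply Rplus_le_compat; auto using in_eq, in_cons.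
Qed.

Lemma lprod_abs_le f g l : (forall x, In x l -> Rabs (f x) <= g x) -> Rabs (lprod f l) <= lprod g l.
Proof.
  induction l as [|x l IH]; intros H; [simpl; rewrite Rabs_R1; lra|].
  rewrite !lprod_cons, Rabs_mult.
  apply Rmult_le_compat; auto using Rabs_pos, in_eq, in_cons.
Qed.

End ListSums.

Lemma lsum_comm {T U : Type} (F : T -> U -> R) (l : list T) (l' : list U) :
  lsum (fun x => lsum (fun y => F x y) l') l = lsum (fun y => lsum (fun x => F x y) l) l'.
Proof.
  induction l as [|x l IH].
  - transitivity 0; [reflexivity | symmetry; apply lsum_zero; reflexivity].
  - rewrite lsum_cons, IH, <- lsum_plus; reflexivity.
Qed.

Lemma lsum_flat_map {T U : Type} (f : U -> R) (g : T -> list U) (l : list T) :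
  lsum f (flat_map g l) = lsum (fun x => lsum f (g x)) l.
Proof.
  induction l as [|x l IH]; [reflexivity|].
  change (flat_map g (x :: l)) with (g x ++ flat_map g l).
  rewrite lsum_app, lsum_cons, IH; reflexivity.
Qed.

Lemma lsum_map {T U : Type} (f : U -> R) (g : T -> U) (l : list T) :
  lsum f (map g l) = lsum (fun x => f (g x)) l.
Proof. induction l as [|x l IH]; [reflexivity|]. simpl map; rewrite !lsum_cons, IH; reflexivity. Qed.

Lemma lprod_exp {T : Type} (f : T -> R) (l : list T) :
  lprod (fun x => exp (f x)) l = exp (lsum f l).
Proof.
  induction l as [|x l IH]; [simpl; rewrite exp_0; reflexivity|].
  rewrite lprod_cons, lsum_cons, IH, exp_plus; reflexivity.
Qed.

Lemma seq_last (m : nat) : seq 1 (S m) = seq 1 m ++ [S m].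
Proof. rewrite seq_S; reflexivity. Qed.

Lemma lsum_pick (i : nat) (a : nat -> R) (l : list nat) : NoDup l -> In i l ->
  lsum (fun j => if j =? i then a j else 0) l = a i.
Proof.
  induction l as [|x l IH]; intros Hd Hi; [destruct Hi|].
  inversion Hd as [|? ? Hx Hd']; subst; rewrite lsum_cons.
  destruct (Nat.eqb_spec x i) as [->|Hne].
  - rewrite lsum_zero; [ring|].
    intros y Hy; destruct (Nat.eqb_spec y i); [subst; contradiction | reflexivity].
  - destruct Hi as [->|Hi]; [contradiction|]. rewrite IH; auto; ring.
Qed.

Lemma lprod_if_notin (i : nat) (a b : nat -> R) (l : list nat) : ~ In i l ->
  lprod (fun j => if j =? i then a j else b j) l = lprod b l.
Proof.
  intros Hi; apply lprod_ext_in; intros j Hj.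
  destruct (Nat.eqb_spec j i); [subst; contradiction | reflexivity].
Qed.

Lemma lprod_pick (i : nat) (a b : nat -> R) (l : list nat) : NoDup l -> In i l ->
  lprod (fun j => if j =? i then a j else b j) l = a i * lprod (fun j => if j =? i then 1 else b j) l.
Proof.
  induction l as [|x l IH]; intros Hd Hi; [destruct Hi|].
  inversion Hd as [|? ? Hx Hd']; subst; rewrite !lprod_cons.
  destruct (Nat.eqb_spec x i) as [->|Hne].
  - rewrite !(lprod_if_notin i) by exact Hx; ring.
  - destruct Hi as [->|Hi]; [contradiction|]. rewrite IH; auto; ring.
Qed.

Lemma lprod_marked_le (i : nat) (r : R) (e : nat -> R) (l : list nat) :
  NoDup l -> 1 <= r -> (forall j, In j l -> 0 <= e j) ->
  lprod (fun j => if j =? i then r * e j else e j) l <= r * lprod e l.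
Proof.
  intros Hd Hr He.
  assert (Hpos : forall l', (forall j, In j l' -> 0 <= e j) -> 0 <= lprod e l').
  { induction l' as [|x l' IH]; intros H; [simpl; lra|].
    rewrite lprod_cons; apply Rmult_le_pos; auto using in_eq, in_cons. }
  induction l as [|x l IH]; [simpl; lra|].
  inversion Hd as [|? ? Hx Hd']; subst; rewrite !lprod_cons.
  assert (He' : forall j, In j l -> 0 <= e j) by auto using in_cons.
  assert (Hex : 0 <= e x) by auto using in_eq.
  destruct (Nat.eqb_spec x i) as [->|Hne].
  - rewrite (lprod_if_notin i) by exact Hx; lra.
  - specialize (IH Hd' He'); specialize (Hpos l He'). nra.
Qed.

Lemma upd_ne (c : nat -> R) (k : nat) (a : R) (j : nat) : j <> k -> upd c k a j = c j.
Proof. intros H; unfold upd; destruct (Nat.eqb_spec j k); [contradiction | reflexivity]. Qed.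

Lemma upd_eq (c : nat -> R) (k : nat) (a : R) : upd c k a k = a.
Proof. unfold upd; rewrite Nat.eqb_refl; reflexivity. Qed.

Lemma all_vecs_in (vals : list R) (k : nat) (c : nat -> R) :
  In c (all_vecs vals k) -> forall i, (1 <= i <= k)%nat -> In (c i) vals.
Proof.
  revert c; induction k as [|k IH]; intros c Hc i Hi; [lia|].
  apply in_flat_map in Hc as [c0 [Hc0 Hc]]; apply in_map_iff in Hc as [a [<- Ha]].
  destruct (Nat.eq_dec i (S k)) as [->|Hne]; [rewrite upd_eq; exact Ha|].
  rewrite upd_ne by exact Hne; apply IH; auto; lia.
Qed.

Lemma lsum_grid_lprod (vals : list R) (f : nat -> R -> R) (k : nat) :
  lsum (fun c => lprod (fun i => f i (c i)) (seq 1 k)) (all_vecs vals k) =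
  lprod (fun i => lsum (f i) vals) (seq 1 k).
Proof.
  induction k as [|k IH]; [unfold lsum, lprod; simpl; ring|].
  simpl all_vecs; rewrite lsum_flat_map, seq_last, lprod_app, lprod_single, <- IH.
  rewrite Rmult_comm, <- lsum_scal; apply lsum_ext_in; intros c _.
  rewrite lsum_map, Rmult_comm, <- lsum_scal; apply lsum_ext_in; intros a _.
  rewrite lprod_app, lprod_single, upd_eq; f_equal.
  apply lprod_ext_in; intros j Hj; apply in_seq in Hj; rewrite upd_ne by lia; reflexivity.
Qed.

(* The two kinds of one-coordinate factors of the estimator, for a mask
   probability [q]: a debiased exponential and a debiased linear term.  Under
   a mask C with Pr[C = 1] = 1 - q their expectations at C x are exp(a x) and
   exp(a x) x respectively. *)
Definition dphi (q a x : R) : R := (exp (a * x) - q) / (1 - q).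
Definition dpsi (q a x : R) : R := exp (a * x) * x / (1 - q).

Definition efactor (n : nat) (p w : nat -> R) (xn : R) (i j : nat) (x : R) : R :=
  if j =? i then dpsi (p j) (- vv n w j * xn) x else dphi (p j) (- vv n w j * xn) x.

Lemma g_under_product (m : nat) (p w X : nat -> R) (i : nat) : (1 <= i <= S m)%nat ->
  g_under (S m) p w X i =
  - dpsi (p (S m)) (- vv (S m) w (S m)) (X (S m)) *
    lprod (fun j => efactor (S m) p w (X (S m)) i j (X j)) (seq 1 m).
Proof.
  intros Hi; unfold g_under, efactor, idx; replace (S m - 1)%nat with m by lia.
  destruct (Nat.eqb_spec i (S m)) as [->|Hne].
  - rewrite lprod_if_notin by (intro H; apply in_seq in H; lia). reflexivity.
  - symmetry; rewrite lprod_pick by (apply seq_NoDup || (apply in_seq; lia)).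
    unfold dpsi, dphi; ring.
Qed.

Definition mask_weight (q a : R) : R := if Req_EM_T a 1 then 1 - q else q.

Lemma mask_mean (q : R) (f : R -> R) :
  lsum (fun a => mask_weight q a * f a) [1; 0] = (1 - q) * f 1 + q * f 0.
Proof.
  unfold lsum, mask_weight; simpl.
  destruct (Req_EM_T 1 1); [|lra]. destruct (Req_EM_T 0 1); [lra|]. ring.
Qed.

Lemma dphi_mean (q a z : R) : q < 1 ->
  lsum (fun c => mask_weight q c * dphi q a (c * z)) [1; 0] = exp (a * z).
Proof.
  intros Hq; rewrite mask_mean; unfold dphi.
  rewrite Rmult_1_l, Rmult_0_l, Rmult_0_r, exp_0; field; lra.
Qed.

Lemma dpsi_mean (q a z : R) : q < 1 ->
  lsum (fun c => mask_weight q c * dpsi q a (c * z)) [1; 0] = exp (a * z) * z.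
Proof.
  intros Hq; rewrite mask_mean; unfold dpsi.
  rewrite Rmult_1_l, Rmult_0_l; field; lra.
Qed.

(* The exponent of S~ is linear in v: it equals sum_i v_i * ecoef n z i. *)
Definition ecoef (n : nat) (z : nat -> R) (i : nat) : R := - z n * (if i =? n then 1 else z i).
Definition expo (n : nat) (w z : nat -> R) : R := lsum (fun i => vv n w i * ecoef n z i) (idx n).

Lemma expo_split (m : nat) (w z : nat -> R) :
  expo (S m) w z =
  lsum (fun j => - vv (S m) w j * z (S m) * z j) (seq 1 m) + - vv (S m) w (S m) * z (S m).
Proof.
  unfold expo, idx; rewrite seq_last, lsum_app; unfold lsum at 2; simpl.
  unfold ecoef at 2; rewrite Nat.eqb_refl; f_equal; [|ring].
  apply lsum_ext_in; intros j Hj; apply in_seq in Hj.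
  unfold ecoef; rewrite (proj2 (Nat.eqb_neq j (S m))) by lia; ring.
Qed.

Lemma Stilde_exponent (m : nat) (w z : nat -> R) :
  - lsum (fun j => vv (S m) w j * z (S m) * z j) (idx (S m - 1)) - vv (S m) w (S m) * z (S m) =
  expo (S m) w z.
Proof.
  rewrite expo_split; unfold idx; replace (S m - 1)%nat with m by lia.
  rewrite (lsum_ext_in (fun j => - vv (S m) w j * z (S m) * z j)
                       (fun j => -1 * (vv (S m) w j * z (S m) * z j))), lsum_scal by (intros; ring).
  ring.
Qed.

Lemma lprod_extract (i : nat) (b : nat -> R) (l : list nat) : NoDup l -> In i l ->
  lprod b l = b i * lprod (fun j => if j =? i then 1 else b j) l.
Proof.
  intros Hd Hi; rewrite <- lprod_pick by assumption.
  apply lprod_ext_in; intros j _; destruct (j =? i); reflexivity.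
Qed.

(* When C_n = 0 both sides vanish, so
   the factors j < n may use Z_n in place of X_n. *)
Lemma masked_g_product (m : nat) (p w z c : nat -> R) (i : nat) :
  (1 <= i <= S m)%nat -> c (S m) = 1 \/ c (S m) = 0 ->
  mask_pr (S m) p c * g_under (S m) p w (fun j => c j * z j) i =
  lprod (fun j => mask_weight (p j) (c j) *
                  (if j =? S m then - dpsi (p j) (- vv (S m) w j) (c j * z j)
                   else efactor (S m) p w (z (S m)) i j (c j * z j))) (seq 1 (S m)).
Proof.
  intros Hi Hc; rewrite g_under_product by exact Hi; cbv beta.
  change (mask_pr (S m) p c) with (lprod (fun j => mask_weight (p j) (c j)) (idx (S m))).
  unfold idx; rewrite lprod_mult, !seq_last, !lprod_app, !lprod_single, Nat.eqb_refl.
  rewrite (lprod_if_notin (S m)) by (intro H; apply in_seq in H; lia).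
  destruct Hc as [Hc|Hc]; rewrite Hc.
  - replace (1 * z (S m)) with (z (S m)) by ring; ring.
  - assert (Hz : dpsi (p (S m)) (- vv (S m) w (S m)) (0 * z (S m)) = 0)
      by (unfold dpsi, Rdiv; ring).
    rewrite Hz; ring.
Qed.

Lemma bits_last (m : nat) (c : nat -> R) : In c (bits (S m)) -> c (S m) = 1 \/ c (S m) = 0.
Proof.
  intros H; destruct (all_vecs_in _ _ _ H (S m)) as [E|[E|[]]]; auto; lia.
Qed.

Lemma masked_g_mean (m : nat) (p w z : nat -> R) (i : nat) :
  (forall j, (1 <= j <= S m)%nat -> p j < 1) -> (1 <= i <= S m)%nat ->
  lsum (fun c => mask_pr (S m) p c * g_under (S m) p w (fun j => c j * z j) i) (bits (S m)) =
  ecoef (S m) z i * exp (expo (S m) w z).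
Proof.
  intros Hp Hi.
  rewrite (lsum_ext_in _ _ _ (fun c Hc => masked_g_product m p w z c i Hi (bits_last m c Hc))).
  unfold bits; rewrite (lsum_grid_lprod _ (fun j a => mask_weight (p j) a *
    (if j =? S m then - dpsi (p j) (- vv (S m) w j) (a * z j)
     else efactor (S m) p w (z (S m)) i j (a * z j)))), seq_last, lprod_app, lprod_single; cbv beta.
  rewrite Nat.eqb_refl, mask_mean.
  set (e := fun j => - vv (S m) w j * z (S m) * z j).
  assert (Hlast : (1 - p (S m)) * - dpsi (p (S m)) (- vv (S m) w (S m)) (1 * z (S m)) +
                  p (S m) * - dpsi (p (S m)) (- vv (S m) w (S m)) (0 * z (S m)) =
                  - z (S m) * exp (- vv (S m) w (S m) * z (S m))).
  { assert (p (S m) < 1) by (apply Hp; lia). unfold dpsi; rewrite Rmult_1_l; field; lra. }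
  rewrite Hlast.
  rewrite (lprod_ext_in _ (fun j => if j =? i then exp (e j) * z j else exp (e j))).
  2:{ intros j Hj; apply in_seq in Hj; rewrite (proj2 (Nat.eqb_neq j (S m))) by lia.
      assert (p j < 1) by (apply Hp; lia).
      unfold efactor; destruct (j =? i); [apply dpsi_mean | apply dphi_mean]; assumption. }
  rewrite expo_split, exp_plus, <- (lprod_exp e); fold e; unfold ecoef.
  destruct (Nat.eqb_spec i (S m)) as [->|Hne].
  - rewrite lprod_if_notin by (intro H; apply in_seq in H; lia). ring.
  - rewrite lprod_pick, (lprod_extract i (fun j => exp (e j))) by (apply seq_NoDup || (apply in_seq; lia)).
    ring.
Qed.

Definition basis_diff (n k i : nat) : R :=
  (if i =? k then 1 else 0) - (if (n + i) =? k then 1 else 0).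

Lemma G_under_low (n : nat) (p w X : nat -> R) (k : nat) :
  (1 <= k <= n)%nat -> G_under n p w X k = g_under n p w X k.
Proof.
  intros Hk; unfold G_under.
  destruct (Nat.leb_spec 1 k), (Nat.leb_spec k n); simpl; [reflexivity | lia..].
Qed.

Lemma G_under_high (n : nat) (p w X : nat -> R) (k : nat) :
  (n + 1 <= k <= 2 * n)%nat -> G_under n p w X k = - g_under n p w X (k - n).
Proof.
  intros Hk; unfold G_under.
  destruct (Nat.leb_spec 1 k), (Nat.leb_spec k n), (Nat.leb_spec (n + 1) k), (Nat.leb_spec k (2 * n));
    simpl; try lia; reflexivity.
Qed.

Lemma G_under_out (n : nat) (p w X : nat -> R) (k : nat) :
  ~ (1 <= k <= 2 * n)%nat -> G_under n p w X k = 0.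
Proof.
  intros Hk; unfold G_under.
  destruct (Nat.leb_spec 1 k), (Nat.leb_spec k n), (Nat.leb_spec (n + 1) k), (Nat.leb_spec k (2 * n));
    simpl; try lia; reflexivity.
Qed.

Lemma G_under_sum (n : nat) (p w X : nat -> R) (k : nat) :
  G_under n p w X k = lsum (fun i => basis_diff n k i * g_under n p w X i) (idx n).
Proof.
  unfold idx, basis_diff.
  destruct (le_lt_dec k n) as [Hkn|Hkn]; [destruct (Nat.eq_dec k 0) as [->|Hk0]|].
  - rewrite G_under_out by lia; symmetry; apply lsum_zero; intros i Hi; apply in_seq in Hi.
    destruct (Nat.eqb_spec i 0), (Nat.eqb_spec (n + i) 0); try lia; ring.
  - rewrite G_under_low by lia.
    rewrite (lsum_ext_in _ (fun i => if i =? k then g_under n p w X i else 0)).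
    + symmetry; apply lsum_pick; [apply seq_NoDup | apply in_seq; lia].
    + intros i Hi; apply in_seq in Hi.
      destruct (Nat.eqb_spec i k), (Nat.eqb_spec (n + i) k); try lia; ring.
  - destruct (le_lt_dec k (2 * n)) as [Hk2|Hk2].
    + rewrite G_under_high by lia.
      rewrite (lsum_ext_in _ (fun i => if i =? k - n then - g_under n p w X i else 0)).
      * symmetry; apply (lsum_pick (k - n) (fun i => - g_under n p w X i));
          [apply seq_NoDup | apply in_seq; lia].
      * intros i Hi; apply in_seq in Hi.
        destruct (Nat.eqb_spec i k), (Nat.eqb_spec (n + i) k), (Nat.eqb_spec i (k - n)); try lia; ring.
    + rewrite G_under_out by lia; symmetry; apply lsum_zero; intros i Hi; apply in_seq in Hi.
      destruct (Nat.eqb_spec i k), (Nat.eqb_spec (n + i) k); try lia; ring.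
Qed.

(* Directional derivative of the exponent of S~ along e^k. *)
Definition slope (n k : nat) (z : nat -> R) : R := lsum (fun i => basis_diff n k i * ecoef n z i) (idx n).

Lemma masked_G_mean (m : nat) (p w z : nat -> R) (k : nat) :
  (forall j, (1 <= j <= S m)%nat -> p j < 1) ->
  lsum (fun c => mask_pr (S m) p c * G_under (S m) p w (fun j => c j * z j) k) (bits (S m)) =
  slope (S m) k z * exp (expo (S m) w z).
Proof.
  intros Hp.
  rewrite (lsum_ext_in _ (fun c => lsum (fun i => basis_diff (S m) k i *
             (mask_pr (S m) p c * g_under (S m) p w (fun j => c j * z j) i)) (idx (S m)))).
  2:{ intros c _; rewrite G_under_sum, <- lsum_scal; apply lsum_ext_in; intros; ring. }
  rewrite lsum_comm; unfold slope; rewrite Rmult_comm, <- lsum_scal.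
  apply lsum_ext_in; intros i Hi; apply in_seq in Hi.
  rewrite lsum_scal, masked_g_mean by (assumption || lia); ring.
Qed.

Lemma derivable_pt_lim_lsum {T : Type} (F : T -> R -> R) (dF : T -> R) (l : list T) (x : R) :
  (forall y, In y l -> derivable_pt_lim (F y) x (dF y)) ->
  derivable_pt_lim (fun t => lsum (fun y => F y t) l) x (lsum dF l).
Proof.
  induction l as [|y l IH]; intros H; [exact (derivable_pt_lim_const 0 x)|].
  apply (derivable_pt_lim_plus (F y) (fun t => lsum (fun y => F y t) l));
    auto using in_eq, in_cons.
Qed.

Lemma derivable_pt_lim_exp_affine (a b : R) :
  derivable_pt_lim (fun t => exp (a + b * t)) 0 (b * exp a).
Proof.
  assert (Haff : derivable_pt_lim (fun t => a + b * t) 0 b).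
  { pose proof (derivable_pt_lim_plus (fct_cte a) (mult_real_fct b id) 0 0 (b * 1)
      (derivable_pt_lim_const a 0) (derivable_pt_lim_scal id b 0 1 (derivable_pt_lim_id 0))) as H.
    rewrite Rplus_0_l, Rmult_1_r in H.
    eapply derivable_pt_lim_ext; [|exact H]; intros t; reflexivity. }
  replace (b * exp a) with (exp (a + b * 0) * b) by (rewrite Rmult_0_r, Rplus_0_r; ring).
  apply (derivable_pt_lim_comp (fun t => a + b * t) exp); [exact Haff | apply derivable_pt_lim_exp].
Qed.

Lemma vv_shift (n : nat) (w : nat -> R) (k j : nat) (t : R) :
  vv n (shift w k t) j = vv n w j + basis_diff n k j * t.
Proof. unfold vv, shift, basis_diff; destruct (j =? k), (n + j =? k); ring. Qed.

Lemma expo_shift (n : nat) (w z : nat -> R) (k : nat) (t : R) :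
  expo n (shift w k t) z = expo n w z + slope n k z * t.
Proof.
  unfold expo, slope.
  rewrite (lsum_ext_in _ (fun i => vv n w i * ecoef n z i + t * (basis_diff n k i * ecoef n z i)))
    by (intros; rewrite vv_shift; ring).
  rewrite lsum_plus, lsum_scal; ring.
Qed.

Lemma Stilde_derivative (m : nat) (A : nat -> nat -> R) (theta w : nat -> R) (k : nat) :
  derivable_pt_lim (fun t => Stilde (S m) A theta (shift w k t)) 0
    (ising_E (S m) A theta (fun z => slope (S m) k z * exp (expo (S m) w z))).
Proof.
  unfold Stilde, ising_E; apply derivable_pt_lim_lsum; intros z _.
  apply derivable_pt_lim_ext with
    (fun t => exp (expo (S m) w z + slope (S m) k z * t) * ising_pr (S m) A theta z).
  { intros t; rewrite Stilde_exponent, expo_shift; ring. }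
  rewrite Rmult_comm; apply derivable_pt_lim_scal_right, derivable_pt_lim_exp_affine.
Qed.

Lemma G_under_unbiased (m : nat) (A : nat -> nat -> R) (theta p w : nat -> R) (k : nat) :
  (forall j, (1 <= j <= S m)%nat -> p j < 1) ->
  derivable_pt_lim (fun t => Stilde (S m) A theta (shift w k t)) 0
    (miss_E (S m) A theta p (fun X => G_under (S m) p w X k)).
Proof.
  intros Hp.
  replace (miss_E (S m) A theta p (fun X => G_under (S m) p w X k))
    with (ising_E (S m) A theta (fun z => slope (S m) k z * exp (expo (S m) w z))).
  { apply Stilde_derivative. }
  unfold miss_E, ising_E; apply lsum_ext_in; intros z _.
  rewrite <- (masked_G_mean m p w z k Hp), <- lsum_scal; apply lsum_ext_in; intros; ring.
Qed.

Lemma exp_monotone (x y : R) : x <= y -> exp x <= exp y.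
Proof. intros [H| ->]; [left; apply exp_increasing; exact H | right; reflexivity]. Qed.

(* Convexity of exp: 1 + r (e^x - 1) <= e^{r x} for r >= 1.  Indeed
   e^{rx} = e^x e^{(r-1)x} >= e^x (1 + (r-1) x), and the difference with the
   left-hand side is (r-1)(1 - e^x (1-x)) >= 0 since 1 - x <= e^{-x}. *)
Lemma exp_convexity (r x : R) : 1 <= r -> 1 + r * (exp x - 1) <= exp (r * x).
Proof.
  intros Hr.
  assert (Hsplit : exp (r * x) = exp x * exp ((r - 1) * x))
    by (rewrite <- exp_plus; f_equal; ring).
  assert (Hinv : exp x * exp (- x) = 1) by (rewrite <- exp_plus, Rplus_opp_r, exp_0; reflexivity).
  pose proof (exp_pos x) as Hx.
  assert (H1 : exp x * (1 + (r - 1) * x) <= exp x * exp ((r - 1) * x))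
    by (apply Rmult_le_compat_l; [lra | apply exp_ineq1_le]).
  assert (H2 : exp x * (1 - x) <= 1).
  { rewrite <- Hinv; apply Rmult_le_compat_l; [lra|].
    pose proof (exp_ineq1_le (- x)); lra. }
  assert (H3 : 0 <= (r - 1) * (1 - exp x * (1 - x))) by (apply Rmult_le_pos; lra).
  rewrite Hsplit; nra.
Qed.

Lemma dphi_bound (q r a x u : R) : 0 <= q < 1 -> / (1 - q) <= r -> Rabs (a * x) <= u ->
  Rabs (dphi q a x) <= exp (r * u).
Proof.
  intros Hq Hr Hu.
  set (s := / (1 - q)) in *.
  assert (Hs : 1 <= s) by (unfold s; rewrite <- Rinv_1; apply Rinv_le_contravar; lra).
  assert (Hdphi : dphi q a x = 1 + s * (exp (a * x) - 1)) by (unfold dphi, s; field; lra).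
  assert (Hax : - u <= a * x <= u).
  { pose proof (Rle_abs (a * x)); pose proof (Rle_abs (- (a * x))) as Hneg.
    rewrite Rabs_Ropp in Hneg; lra. }
  assert (Hu0 : 0 <= u) by lra.
  assert (Hsu : s * (a * x) <= r * u).
  { apply Rle_trans with (s * u); [apply Rmult_le_compat_l | apply Rmult_le_compat_r]; lra. }
  assert (Hup : exp (s * (a * x)) <= exp (r * u)) by (apply exp_monotone; exact Hsu).
  pose proof (exp_convexity s (a * x) Hs).
  pose proof (exp_ineq1_le (a * x)). pose proof (exp_ineq1_le (r * u)).
  rewrite Hdphi; apply Rabs_le; split; nra.
Qed.

Lemma dpsi_bound (q r a x u : R) : 0 <= q < 1 -> / (1 - q) <= r -> 1 <= r ->
  Rabs x <= 1 -> Rabs (a * x) <= u -> Rabs (dpsi q a x) <= r * exp (r * u).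
Proof.
  intros Hq Hr Hr1 Hx Hu.
  assert (Hs : 0 < / (1 - q)) by (apply Rinv_0_lt_compat; lra).
  assert (He : exp (a * x) <= exp (r * u)).
  { apply exp_monotone; pose proof (Rle_abs (a * x)); pose proof (Rabs_pos (a * x)); nra. }
  unfold dpsi, Rdiv; rewrite !Rabs_mult.
  rewrite (Rabs_right (exp (a * x))) by (left; apply exp_pos).
  rewrite (Rabs_right (/ (1 - q))) by lra.
  pose proof (exp_pos (a * x)); pose proof (Rabs_pos x).
  apply Rle_trans with (exp (r * u) * 1 * r); [|lra].
  apply Rmult_le_compat; try nra.
Qed.

Lemma Rabs_mult_le_l (v a : R) : Rabs a <= 1 -> Rabs (v * a) <= Rabs v.
Proof. intros Ha; rewrite Rabs_mult; pose proof (Rabs_pos v); pose proof (Rabs_pos a); nra. Qed.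

Lemma g_under_bound (m : nat) (p w X : nat -> R) (i : nat) (r : R) :
  (forall j, (1 <= j <= S m)%nat -> 0 <= p j < 1) ->
  (forall j, (1 <= j <= S m)%nat -> / (1 - p j) <= r) -> 1 <= r ->
  (forall j, (1 <= j <= S m)%nat -> Rabs (X j) <= 1) -> (1 <= i <= S m)%nat ->
  Rabs (g_under (S m) p w X i) <= r ^ 2 * exp (r * lsum (fun j => Rabs (vv (S m) w j)) (seq 1 (S m))).
Proof.
  intros Hp Hpr Hr HX Hi.
  set (e := fun j => exp (r * Rabs (vv (S m) w j))).
  assert (Hv : forall j, (1 <= j <= S m)%nat ->
            Rabs (- vv (S m) w j * X (S m) * X j) <= Rabs (vv (S m) w j)).
  { intros j Hj; rewrite <- Rabs_Ropp with (x := vv _ _ _).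
    eapply Rle_trans; apply Rabs_mult_le_l; apply HX; lia. }
  assert (Hhead : Rabs (dpsi (p (S m)) (- vv (S m) w (S m)) (X (S m))) <= r * e (S m)).
  { apply dpsi_bound; auto; try (apply HX || apply Hp || apply Hpr); try lia.
    rewrite <- Rabs_Ropp with (x := vv _ _ _); apply Rabs_mult_le_l, HX; lia. }
  assert (Htail : Rabs (lprod (fun j => efactor (S m) p w (X (S m)) i j (X j)) (seq 1 m))
                  <= r * lprod e (seq 1 m)).
  { eapply Rle_trans; [apply lprod_abs_le with (g := fun j => if j =? i then r * e j else e j)|].
    - intros j Hj; apply in_seq in Hj; unfold efactor, e.
      destruct (j =? i); [apply dpsi_bound | apply dphi_bound];
        try (apply HX || apply Hp || apply Hpr || apply Hv); auto; lia.
    - apply lprod_marked_le; [apply seq_NoDup | exact Hr | intros; left; apply exp_pos]. }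
  rewrite g_under_product, Rabs_mult, Rabs_Ropp by exact Hi.
  rewrite seq_last, lsum_app, Rmult_plus_distr_l, exp_plus, <- !lsum_scal, <- (lprod_exp _ (seq 1 m)).
  apply Rle_trans with ((r * e (S m)) * (r * lprod e (seq 1 m))).
  - apply Rmult_le_compat; auto using Rabs_pos.
  - unfold e, lsum; simpl; rewrite Rplus_0_r; right; ring.
Qed.

Lemma lsum_shift (w : nat -> R) (a len s : nat) :
  lsum (fun j => w (a + j)%nat) (seq s len) = lsum w (seq (a + s) len).
Proof.
  revert s; induction len as [|len IH]; intros s; [reflexivity|].
  simpl seq; rewrite !lsum_cons, IH, Nat.add_succ_r; reflexivity.
Qed.

Lemma sum_abs_vv_le (n : nat) (w : nat -> R) :
  (forall k, (1 <= k <= 2 * n + 1)%nat -> 0 <= w k) ->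
  lsum (fun j => Rabs (vv n w j)) (seq 1 n) <= lsum w (seq 1 (2 * n + 1)).
Proof.
  intros Hw.
  apply Rle_trans with (lsum (fun j => w j + w (n + j)%nat) (seq 1 n)).
  - apply lsum_le; intros j Hj; apply in_seq in Hj; unfold vv.
    assert (0 <= w j) by (apply Hw; lia); assert (0 <= w (n + j)%nat) by (apply Hw; lia).
    apply Rabs_le; lra.
  - rewrite lsum_plus, lsum_shift.
    replace (2 * n + 1)%nat with (n + (n + 1))%nat by lia.
    rewrite !seq_app, !lsum_app, (Nat.add_comm n 1).
    assert (Hlast : lsum w (seq (1 + n + n) 1) = w (1 + n + n)%nat) by (unfold lsum; simpl; ring).
    assert (0 <= w (1 + n + n)%nat) by (apply Hw; lia).
    rewrite Hlast; lra.
Qed.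

Lemma pmax_bounds (p : nat -> R) (l : list nat) : (forall i, In i l -> 0 <= p i < 1) ->
  (0 <= fold_right Rmax 0 (map p l) < 1) /\ (forall i, In i l -> p i <= fold_right Rmax 0 (map p l)).
Proof.
  induction l as [|x l IH]; intros H; [simpl; split; [lra | intros i []]|].
  destruct IH as [[I0 I1] I2]; [intros; apply H, in_cons; assumption|].
  assert (Hx := H x (in_eq x l)); simpl.
  split; [split|].
  - eapply Rle_trans; [exact I0 | apply Rmax_r].
  - apply Rmax_lub_lt; lra.
  - intros i [->|Hi]; [apply Rmax_l|]. eapply Rle_trans; [apply I2, Hi | apply Rmax_r].
Qed.

Lemma G_under_bound (m : nat) (p : nat -> R) (lam : R) (X w : nat -> R) (k : nat) :
  (forall i, (1 <= i <= S m)%nat -> 0 <= p i < 1) ->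
  (forall i, (1 <= i <= S m)%nat -> X i = -1 \/ X i = 0 \/ X i = 1) ->
  (forall k, (1 <= k <= 2 * S m + 1)%nat -> 0 <= w k) ->
  lsum w (seq 1 (2 * S m + 1)) = lam ->
  Rabs (G_under (S m) p w X k) <= / (1 - pmax (S m) p) ^ 2 * exp (lam / (1 - pmax (S m) p)).
Proof.
  intros Hp HX Hw Hlam.
  destruct (pmax_bounds p (idx (S m))) as [HP HPi]; [intros i Hi; apply in_seq in Hi; apply Hp; lia|].
  fold (pmax (S m) p) in HP, HPi; set (P := pmax (S m) p) in *.
  set (r := / (1 - P)).
  assert (Hr : 1 <= r) by (unfold r; rewrite <- Rinv_1; apply Rinv_le_contravar; lra).
  assert (Hpr : forall j, (1 <= j <= S m)%nat -> / (1 - p j) <= r).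
  { intros j Hj; assert (p j <= P) by (apply HPi, in_seq; lia).
    apply Rinv_le_contravar; [assert (Hpj := Hp j Hj)|]; lra. }
  assert (HXb : forall j, (1 <= j <= S m)%nat -> Rabs (X j) <= 1).
  { intros j Hj; apply Rabs_le; destruct (HX j Hj) as [E|[E|E]]; rewrite E; lra. }
  assert (Hg : forall i, (1 <= i <= S m)%nat -> Rabs (g_under (S m) p w X i) <= r ^ 2 * exp (lam * r)).
  { intros i Hi; eapply Rle_trans; [apply (g_under_bound m p w X i r); auto|].
    apply Rmult_le_compat_l; [apply pow_le; lra|]; apply exp_monotone.
    rewrite Rmult_comm; apply Rmult_le_compat_r; [lra|].
    rewrite <- Hlam; apply sum_abs_vv_le, Hw. }
  rewrite <- pow_inv; fold r; unfold Rdiv; fold r.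
  destruct (le_lt_dec k (S m)), (Nat.eq_dec k 0), (le_lt_dec k (2 * S m)).
  all: try (rewrite G_under_out by lia; rewrite Rabs_R0;
            apply Rmult_le_pos; [apply pow_le; lra | left; apply exp_pos]).
  - rewrite G_under_low by lia; apply Hg; lia.
  - rewrite G_under_high, Rabs_Ropp by lia; apply Hg; lia.
Qed.

Theorem mainTheorem10 (n : nat) (A : nat -> nat -> R) (theta : nat -> R)
  (lam : R) (p : nat -> R)
  (Hn : (2 <= n)%nat)
  (Hsym : forall i j, (1 <= i <= n)%nat -> (1 <= j <= n)%nat -> A i j = A j i)
  (Hdiag : forall i, (1 <= i <= n)%nat -> A i i = 0)
  (Hlam : 0 < lam)
  (Hp : forall i, (1 <= i <= n)%nat -> 0 <= p i < 1) :
  (forall (w : nat -> R) (k : nat), (1 <= k <= 2 * n + 1)%nat ->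
     derivable_pt_lim (fun t => Stilde n A theta (shift w k t)) 0
       (miss_E n A theta p (fun X => G_under n p w X k)))
  /\
  (forall (X w : nat -> R),
     (forall i, (1 <= i <= n)%nat -> X i = -1 \/ X i = 0 \/ X i = 1) ->
     (forall k, (1 <= k <= 2 * n + 1)%nat -> 0 <= w k) ->
     lsum w (seq 1 (2 * n + 1)) = lam ->
     forall k, (1 <= k <= 2 * n + 1)%nat ->
       Rabs (G_under n p w X k)
         <= / (1 - pmax n p) ^ 2 * exp (lam / (1 - pmax n p))).
Proof.
  destruct n as [|m]; [lia|].
  split.
  - intros w k _; apply G_under_unbiased; intros j Hj; apply Hp, Hj.
  - intros X w HX Hw Hsum k _; apply (G_under_bound m p lam X w k Hp HX Hw Hsum).
Qed.
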